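(* For all integers $n,a,b$, $$J\mathcal{G}_{n+a}^{(3)}J\mathcal{G}_{n+b}^{(3)}-J\mathcal{G}_{n}^{(3)}J\mathcal{G}_{n+a+b}^{(3)}=\frac{1}{49}\Big\{2^{n+1}\left[\Theta Y_{n+b}(a)-2^{b}Y_{n}(a)\Theta\right]+X_{a}\left[X_{b}\Xi-14X_{b+2}\Omega\right]\Big\}$$ and $$K\mathcal{G}_{n+a}^{(3)}K\mathcal{G}_{n+b}^{(3)}-K\mathcal{G}_{n}^{(3)}K\mathcal{G}_{n+a+b}^{(3)}=2^{n}\left[\Theta Y^{*}_{n+b}(a)-2^{b}Y^{*}_{n}(a)\Theta\right]+X_{a}\left[X_{b}\Xi^{*}-6X_{b+2}\Omega\right],$$ where $Y_{n}(a)=X_{n}(2^{a}\mathbf{A}+X_{a+2}\mathbf{A}-X_{a}\mathbf{B})-X_{n+1}(2^{a}\mathbf{B}+X_{a}\mathbf{A}-X_{a+1}\mathbf{B})$, $Y^{*}_{n}(a)=X_{n}(2^{a}\mathbf{C}+X_{a+2}\mathbf{C}-X_{a}\mathbf{D})-X_{n+1}(2^{a}\mathbf{D}+X_{a}\mathbf{C}-X_{a+1}\mathbf{D})$, $\Xi=\mathbf{A}^2+\mathbf{A}\mathbf{B}+\mathbf{B}^2$ and $\Xi^{*}=\mathbf{C}^2+\mathbf{C}\mathbf{D}+\mathbf{D}^2$.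
   Context: Fix real numbers $\lambda_1,\lambda_2,\lambda_3$. The algebra $\mathbb{H}_{\lambda_1,\lambda_2,\lambda_3}$ of 3-parameter generalized quaternions is the real associative algebra of elements $\psi_0+\psi_1\mathbf{e}_1+\psi_2\mathbf{e}_2+\psi_3\mathbf{e}_3$ ($\psi_i\in\mathbb{R}$) with $\mathbf{e}_1^2=-\lambda_1\lambda_2$, $\mathbf{e}_2^2=-\lambda_1\lambda_3$, $\mathbf{e}_3^2=-\lambda_2\lambda_3$, $\mathbf{e}_1\mathbf{e}_2=-\mathbf{e}_2\mathbf{e}_1=\lambda_1\mathbf{e}_3$, $\mathbf{e}_1\mathbf{e}_3=-\mathbf{e}_3\mathbf{e}_1=-\lambda_2\mathbf{e}_2$, $\mathbf{e}_2\mathbf{e}_3=-\mathbf{e}_3\mathbf{e}_2=\lambda_3\mathbf{e}_1$. The third-order Jacobsthal numbers satisfy $J_0^{(3)}=0$, $J_1^{(3)}=J_2^{(3)}=1$, $J_n^{(3)}=J_{n-1}^{(3)}+J_{n-2}^{(3)}+2J_{n-3}^{(3)}$; the modified third-order Jacobsthal numbers satisfy $K_0^{(3)}=3$, $K_1^{(3)}=1$, $K_2^{(3)}=3$, $K_n^{(3)}=K_{n-1}^{(3)}+K_{n-2}^{(3)}+2K_{n-3}^{(3)}$; both are extended to all integers $n$ by running the recurrence backwards (equivalently by the Binet formulas $J_n^{(3)}=\frac17[2^{n+1}+X_n-2X_{n+1}]$, $K_n^{(3)}=2^n+X_n+2X_{n+1}$, which are rational-valued for negative $n$). For all integers $n$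 define $J\mathcal{G}_n^{(3)}=J_n^{(3)}+J_{n+1}^{(3)}\mathbf{e}_1+J_{n+2}^{(3)}\mathbf{e}_2+J_{n+3}^{(3)}\mathbf{e}_3$ and $K\mathcal{G}_n^{(3)}=K_n^{(3)}+K_{n+1}^{(3)}\mathbf{e}_1+K_{n+2}^{(3)}\mathbf{e}_2+K_{n+3}^{(3)}\mathbf{e}_3$. Here $X_n=0,1,-1$ according as $n\equiv0,1,2\pmod 3$ (for all integers $n$), $\Theta=1+2\mathbf{e}_1+4\mathbf{e}_2+8\mathbf{e}_3$, $\mathbf{A}=1+2\mathbf{e}_1-3\mathbf{e}_2+\mathbf{e}_3$, $\mathbf{B}=2-3\mathbf{e}_1+\mathbf{e}_2+2\mathbf{e}_3$, $\mathbf{C}=1-2\mathbf{e}_1+\mathbf{e}_2+\mathbf{e}_3$, $\mathbf{D}=-2+\mathbf{e}_1+\mathbf{e}_2-2\mathbf{e}_3$, and $\Omega=\lambda_3\mathbf{e}_1+\lambda_2\mathbf{e}_2+\lambda_1\mathbf{e}_3$. *)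

From HB Require Import structures.
From mathcomp Require Import all_boot all_order all_algebra.
From mathcomp Require Import reals.
Set Implicit Arguments. Unset Strict Implicit. Unset Printing Implicit Defensive.
Import Order.TTheory GRing.Theory Num.Theory.
Local Open Scope ring_scope.

Section Defs.
Variable R : realType.

(* 3-parameter generalized quaternions: psi0 + psi1 e1 + psi2 e2 + psi3 e3 *)
Record quat := Quat { q0 : R; q1 : R; q2 : R; q3 : R }.

Definition qadd (p q : quat) : quat :=
  Quat (q0 p + q0 q) (q1 p + q1 q) (q2 p + q2 q) (q3 p + q3 q).
Definition qscale (c : R) (p : quat) : quat :=
  Quat (c * q0 p) (c * q1 p) (c * q2 p) (c * q3 p).
Definition qsub (p q : quat) : quat := qadd p (qscale (-1) q).

(* Multiplication in H_{l1,l2,l3}, obtained from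
   e1^2=-l1 l2, e2^2=-l1 l3, e3^2=-l2 l3,
   e1e2=-e2e1=l1 e3, e1e3=-e3e1=-l2 e2, e2e3=-e3e2=l3 e1. *)
Definition qmul (l1 l2 l3 : R) (p q : quat) : quat :=
  let a0 := q0 p in let a1 := q1 p in let a2 := q2 p in let a3 := q3 p in
  let b0 := q0 q in let b1 := q1 q in let b2 := q2 q in let b3 := q3 q in
  Quat (a0 * b0 - l1 * l2 * a1 * b1 - l1 * l3 * a2 * b2 - l2 * l3 * a3 * b3)
       (a0 * b1 + a1 * b0 + l3 * (a2 * b3 - a3 * b2))
       (a0 * b2 + a2 * b0 - l2 * (a1 * b3 - a3 * b1))
       (a0 * b3 + a3 * b0 + l1 * (a1 * b2 - a2 * b1)).

(* Third-order sequence u_n = u_{n-1} + u_{n-2} + 2 u_{n-3} with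
   u_0 = c0, u_1 = c1, u_2 = c2, extended to all integers by running the
   recurrence backwards: u_{m-1} = (u_{m+2} - u_{m+1} - u_m) / 2. *)
Fixpoint tri_fwd (c0 c1 c2 : R) (k : nat) : R * R * R :=
  match k with
  | 0%N => (c0, c1, c2)
  | k'.+1 => let: (a, b, c) := tri_fwd c0 c1 c2 k' in (b, c, c + b + 2 * a)
  end.
Fixpoint tri_bwd (c0 c1 c2 : R) (k : nat) : R * R * R :=
  match k with
  | 0%N => (c0, c1, c2)
  | k'.+1 => let: (a, b, c) := tri_bwd c0 c1 c2 k' in ((c - b - a) / 2, a, b)
  end.
Definition tri_seq (c0 c1 c2 : R) (n : int) : R :=
  match n with
  | Posz k => (tri_fwd c0 c1 c2 k).1.1
  | Negz k => (tri_bwd c0 c1 c2 k.+1).1.1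
  end.

Definition Jac (n : int) : R := tri_seq 0 1 1 n.
Definition Kac (n : int) : R := tri_seq 3 1 3 n.

Definition Xs (n : int) : R :=
  if (n %% 3)%Z == 0 then 0 else if (n %% 3)%Z == 1 then 1 else -1.

Definition JG (n : int) : quat := Quat (Jac n) (Jac (n + 1)) (Jac (n + 2)) (Jac (n + 3)).
Definition KG (n : int) : quat := Quat (Kac n) (Kac (n + 1)) (Kac (n + 2)) (Kac (n + 3)).

Definition Theta : quat := Quat 1 2 4 8.
Definition qA : quat := Quat 1 2 (-3) 1.
Definition qB : quat := Quat 2 (-3) 1 2.
Definition qC : quat := Quat 1 (-2) 1 1.
Definition qD : quat := Quat (-2) 1 1 (-2).
Definition Omega (l1 l2 l3 : R) : quat := Quat 0 l3 l2 l1.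

Definition Ygen (P Q : quat) (n a : int) : quat :=
  qsub (qscale (Xs n) (qsub (qadd (qscale ((2:R) ^ a) P) (qscale (Xs (a + 2)) P))
                             (qscale (Xs a) Q)))
       (qscale (Xs (n + 1)) (qsub (qadd (qscale ((2:R) ^ a) Q) (qscale (Xs a) P))
                                  (qscale (Xs (a + 1)) Q))).
Definition Y (n a : int) : quat := Ygen qA qB n a.
Definition Ystar (n a : int) : quat := Ygen qC qD n a.

Definition Xi (l1 l2 l3 : R) : quat :=
  qadd (qadd (qmul l1 l2 l3 qA qA) (qmul l1 l2 l3 qA qB)) (qmul l1 l2 l3 qB qB).
Definition Xistar (l1 l2 l3 : R) : quat :=
  qadd (qadd (qmul l1 l2 l3 qC qC) (qmul l1 l2 l3 qC qD)) (qmul l1 l2 l3 qD qD).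

End Defs.

(* Both sequences have quaternion Binet forms
     JG_n = (2^(n+1) Theta + X_n A - X_(n+1) B) / 7,   KG_n = 2^n Theta + X_n C - X_(n+1) D,
   where X_(n+2) = - X_n - X_(n+1).  For G_m = 2^m T + V_m the pure powers of 2 cancel in
   G_(n+a) G_(n+b) - G_n G_(n+a+b), and the mixed terms regroup into Y_m(a) = 2^a V_m - V_(m+a).
   By bilinearity the periodic part reduces to the Catalan identity
   X_(n+a) X_(n+b) - X_n X_(n+a+b) = X_a X_b, which follows from the addition formula
   X_(m+a) = X_a X_(m+1) - X_(a+2) X_m and the invariant X_m^2 + X_m X_(m+1) + X_(m+1)^2 = 1.
   The Omega terms come from the commutators AB - BA = -14 Omega and CD - DC = -6 Omega. *)

From HB Require Import structures.
From mathcomp Require Import all_boot all_order all_algebra.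
From mathcomp Require Import reals.
From mathcomp Require Import zify ring.
Import Order.TTheory GRing.Theory Num.Theory.
Local Open Scope ring_scope.
Set Implicit Arguments. Unset Strict Implicit.

Section PeriodicSequence.
Variable R : realType.
Local Notation X := (Xs R).

Lemma Xs_mod (m m' : int) : (m %% 3 = m' %% 3)%Z -> X m = X m'.
Proof. by rewrite /Xs => ->. Qed.

Lemma Xs0 : X 0 = 0. Proof. by []. Qed.
Lemma Xs1 : X 1 = 1. Proof. by []. Qed.
Lemma Xs2 : X 2 = -1. Proof. by []. Qed.

Lemma XsD3 (m : int) : X (m + 3) = X m.
Proof. by apply: Xs_mod; lia. Qed.

Lemma Xs_values (m : int) :
  [\/ [/\ X m = 0, X (m + 1) = 1 & X (m + 2) = -1],
       [/\ X m = 1, X (m + 1) = -1 & X (m + 2) = 0]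
     | [/\ X m = -1, X (m + 1) = 0 & X (m + 2) = 1]].
Proof.
have [h|[h|h]] : (m %% 3 = 0 \/ m %% 3 = 1 \/ m %% 3 = 2)%Z by lia.
- rewrite (@Xs_mod m 0) ?(@Xs_mod (m + 1) 1) ?(@Xs_mod (m + 2) 2); try lia.
  by constructor 1.
- rewrite (@Xs_mod m 1) ?(@Xs_mod (m + 1) 2) ?(@Xs_mod (m + 2) 0); try lia.
  by constructor 2.
- rewrite (@Xs_mod m 2) ?(@Xs_mod (m + 1) 0) ?(@Xs_mod (m + 2) 1); try lia.
  by constructor 3.
Qed.

Lemma Xs_rec (m : int) : X (m + 2) = - X m - X (m + 1).
Proof. by case: (Xs_values m) => -[-> -> ->]; ring. Qed.

Lemma Xs_norm (m : int) : X m ^+ 2 + X m * X (m + 1) + X (m + 1) ^+ 2 = 1.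
Proof. by case: (Xs_values m) => -[-> -> _]; ring. Qed.

Lemma XsD (m a : int) : X (m + a) = X a * X (m + 1) - X (a + 2) * X m.
Proof.
have [h|[h|h]] : (a %% 3 = 0 \/ a %% 3 = 1 \/ a %% 3 = 2)%Z by lia.
- rewrite (@Xs_mod (m + a) m) ?(@Xs_mod a 0) ?(@Xs_mod (a + 2) 2); try lia.
  by rewrite Xs0 Xs2; ring.
- rewrite (@Xs_mod (m + a) (m + 1)) ?(@Xs_mod a 1) ?(@Xs_mod (a + 2) 0); try lia.
  by rewrite Xs0 Xs1; ring.
- rewrite (@Xs_mod (m + a) (m + 2)) ?(@Xs_mod a 2) ?(@Xs_mod (a + 2) 1); try lia.
  by rewrite Xs_rec Xs1 Xs2; ring.
Qed.

Lemma Xs_catalan (n a b : int) :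
  X (n + a) * X (n + b) - X n * X (n + a + b) = X a * X b.
Proof.
have Xab : X (a + b) = X b * X (a + 1) - X (b + 2) * X a by rewrite XsD.
have Xab2 : X (a + b + 2) = X b * X a - X (b + 2) * X (a + 2).
  by rewrite addrAC (XsD (a + 2) b) -addrA XsD3.
rewrite -addrA (XsD n a) (XsD n b) (XsD n (a + b)) Xab Xab2.
rewrite (Xs_rec a) (Xs_rec b).
by rewrite -[X a * X b]mulr1 -(Xs_norm n); ring.
Qed.

End PeriodicSequence.

Section ScalarBinet.
Variable R : realType.
Local Notation X := (Xs R).

Definition tri_rec (f : int -> R) :=
  forall m, f (m + 3) = f (m + 2) + f (m + 1) + 2 * f m.

Lemma tri_seq_unique (c0 c1 c2 : R) (f : int -> R) :
  tri_rec f -> f 0 = c0 -> f 1 = c1 -> f 2 = c2 -> tri_seq c0 c1 c2 =1 f.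
Proof.
move=> rec f0 f1 f2.
have fwd (k : nat) : tri_fwd c0 c1 c2 k = (f k, f (k + 1), f (k + 2)).
  elim: k => [|k IH] /=; first by rewrite f0 f1 f2.
  rewrite IH /= intS; congr (_, _, _); try (congr f; lia).
  by rewrite -(rec k); congr f; lia.
have bwd (k : nat) :
    tri_bwd c0 c1 c2 k = (f (- k%:Z), f (- k%:Z + 1), f (- k%:Z + 2)).
  elim: k => [|k IH] /=; first by rewrite f0 f1 f2.
  have e3 : f (- k%:Z + 2) = f (- k%:Z + 1) + f (- k%:Z) + 2 * f (- k.+1%:Z).
    have := rec (- k.+1%:Z).
    have -> : - k.+1%:Z + 3 = - k%:Z + 2 by lia.
    have -> : - k.+1%:Z + 2 = - k%:Z + 1 by lia.
    by have -> : - k.+1%:Z + 1 = - k%:Z by lia.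
  rewrite IH /= e3; congr (_, _, _); try (congr f; lia).
  by field.
by case=> k; rewrite /tri_seq ?fwd ?bwd ?NegzE.
Qed.

Lemma expz2D (m k : int) : (2 : R) ^ (m + k) = 2 ^ m * 2 ^ k.
Proof. by rewrite expfzDr ?pnatr_eq0. Qed.

Lemma binet_tri_rec (c d e : R) :
  tri_rec (fun k => c * 2 ^ k + d * X k + e * X (k + 1)).
Proof.
move=> m; rewrite !expz2D -!exprnP.
have -> : X (m + 3 + 1) = X (m + 1) by apply: Xs_mod; lia.
have -> : X (m + 2 + 1) = X m by apply: Xs_mod; lia.
have -> : X (m + 1 + 1) = X (m + 2) by congr X; lia.
by rewrite XsD3 Xs_rec; ring.
Qed.

Lemma Jac_binet (m : int) : Jac R m = (2 ^ (m + 1) + X m - 2 * X (m + 1)) / 7.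
Proof.
rewrite /Jac (@tri_seq_unique _ _ _ _ (binet_tri_rec (2 / 7) (1 / 7) (- 2 / 7))).
- by rewrite expz2D; ring.
- by rewrite /Xs /=; ring.
- by rewrite /Xs /= -!exprnP; field.
- by rewrite /Xs /= -!exprnP; field.
Qed.

Lemma Kac_binet (m : int) : Kac R m = 2 ^ m + X m + 2 * X (m + 1).
Proof.
rewrite /Kac (@tri_seq_unique _ _ _ _ (binet_tri_rec 1 1 2)).
- by ring.
- by rewrite /Xs /=; ring.
- by rewrite /Xs /= -!exprnP; ring.
- by rewrite /Xs /= -!exprnP; ring.
Qed.
End ScalarBinet.

Lemma quat_ext (R : realType) (p q : quat R) :
  q0 p = q0 q -> q1 p = q1 q -> q2 p = q2 q -> q3 p = q3 q -> p = q.
Proof. by case: p; case: q => /= ? ? ? ? ? ? ? ? -> -> -> ->. Qed.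

Ltac quat_ring := apply: quat_ext; cbn [q0 q1 q2 q3 qadd qsub qscale qmul]; ring.

Section QuaternionAlgebra.
Variables (R : realType) (l1 l2 l3 : R).
Local Notation X := (Xs R).
Local Notation mul := (qmul l1 l2 l3).

Lemma qmulZZ (c d : R) (p q : quat R) :
  mul (qscale c p) (qscale d q) = qscale (c * d) (mul p q).
Proof. by quat_ring. Qed.

Lemma qsubZ (c : R) (p q : quat R) : qsub (qscale c p) (qscale c q) = qscale c (qsub p q).
Proof. by quat_ring. Qed.

Lemma catalan_pow2_split (T : quat R) (V : int -> quat R) (n a b : int) :
  qsub (mul (qadd (qscale (2 ^ (n + a)) T) (V (n + a)))
            (qadd (qscale (2 ^ (n + b)) T) (V (n + b))))
       (mul (qadd (qscale (2 ^ n) T) (V n))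
            (qadd (qscale (2 ^ (n + a + b)) T) (V (n + a + b))))
  = qadd (qscale (2 ^ n)
            (qsub (mul T (qsub (qscale (2 ^ a) (V (n + b))) (V (n + a + b))))
                  (qscale (2 ^ b) (mul (qsub (qscale (2 ^ a) (V n)) (V (n + a))) T))))
         (qsub (mul (V (n + a)) (V (n + b))) (mul (V n) (V (n + a + b)))).
Proof. by rewrite !expz2D; quat_ring. Qed.

Section PeriodicPart.
Variables P Q : quat R.

Definition xpart (m : int) : quat R := qsub (qscale (X m) P) (qscale (X (m + 1)) Q).

Lemma Ygen_xpart (m a : int) :
  Ygen P Q m a = qsub (qscale (2 ^ a) (xpart m)) (xpart (m + a)).
Proof.
rewrite /Ygen /xpart (XsD R m a) addrAC (XsD R (m + 1) a) -(addrA m 1 1).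
by rewrite !Xs_rec; quat_ring.
Qed.

Definition pq_comb (s t u v : R) : quat R :=
  qadd (qsub (qscale s (mul P P)) (qscale t (mul P Q)))
       (qsub (qscale v (mul Q Q)) (qscale u (mul Q P))).

Lemma qmul_xpart (m k : int) :
  mul (xpart m) (xpart k)
  = pq_comb (X m * X k) (X m * X (k + 1)) (X (m + 1) * X k) (X (m + 1) * X (k + 1)).
Proof. by rewrite /xpart /pq_comb; quat_ring. Qed.

Lemma pq_combB (s t u v s' t' u' v' : R) :
  qsub (pq_comb s t u v) (pq_comb s' t' u' v')
  = pq_comb (s - s') (t - t') (u - u') (v - v').
Proof. by rewrite /pq_comb; quat_ring. Qed.

Lemma xpart_catalan (n a b : int) :
  qsub (mul (xpart (n + a)) (xpart (n + b))) (mul (xpart n) (xpart (n + a + b)))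
  = qscale (X a) (qadd (qscale (X b) (qadd (qadd (mul P P) (mul P Q)) (mul Q Q)))
                       (qscale (X (b + 2)) (qsub (mul P Q) (mul Q P)))).
Proof.
have cat_t : X (n + a) * X (n + b + 1) - X n * X (n + a + b + 1) = X a * X (b + 1).
  by rewrite -(addrA n b 1) -(addrA (n + a) b 1) Xs_catalan.
have cat_u : X (n + a + 1) * X (n + b) - X (n + 1) * X (n + a + b) = X a * X (b + 2).
  rewrite -(@Xs_mod R (b - 1) (b + 2)); last lia.
  have -> : n + a + 1 = n + 1 + a by lia.
  have -> : n + b = n + 1 + (b - 1) by lia.
  have -> : n + a + b = n + 1 + a + (b - 1) by lia.
  exact: Xs_catalan.
have cat_v : X (n + a + 1) * X (n + b + 1) - X (n + 1) * X (n + a + b + 1) = X a * X b.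
  rewrite (addrAC n a 1) (addrAC n b 1).
  have -> : n + a + b + 1 = n + 1 + a + b by lia.
  exact: Xs_catalan.
rewrite !qmul_xpart pq_combB cat_t cat_u cat_v Xs_catalan /pq_comb.
have Xb1 : X (b + 1) = - X b - X (b + 2) by rewrite Xs_rec; ring.
by rewrite Xb1; quat_ring.
Qed.
End PeriodicPart.
End QuaternionAlgebra.

Section QuaternionSequences.
Variables (R : realType) (l1 l2 l3 : R).
Local Notation X := (Xs R).
Local Notation mul := (qmul l1 l2 l3).

Lemma Xs_shifts (n : int) :
  [/\ X (n + 1 + 1) = - X n - X (n + 1), X (n + 2 + 1) = X n,
      X (n + 3) = X n & X (n + 3 + 1) = X (n + 1)].
Proof.
split; last (by apply: Xs_mod; lia); last exact: XsD3.
- by rewrite -(addrA n 1 1) Xs_rec.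
- by apply: Xs_mod; lia.
Qed.

Lemma JG_binet (n : int) :
  JG R n = qscale (1 / 7) (qadd (qscale (2 ^ (n + 1)) (Theta R)) (xpart (qA R) (qB R) n)).
Proof.
have [X2 X3 X3' X4] := Xs_shifts n.
have E k : (2 : R) ^ (n + k + 1) = 2 ^ (n + 1) * 2 ^ k by rewrite addrAC expz2D.
rewrite /JG !Jac_binet !E -!exprnP X2 X3 X3' X4 Xs_rec /Theta /qA /qB /xpart.
by quat_ring.
Qed.

Lemma KG_binet (n : int) :
  KG R n = qadd (qscale (2 ^ n) (Theta R)) (xpart (qC R) (qD R) n).
Proof.
have [X2 X3 X3' X4] := Xs_shifts n.
rewrite /KG !Kac_binet !expz2D -!exprnP X2 X3 X3' X4 Xs_rec /Theta /qC /qD /xpart.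
by quat_ring.
Qed.

Lemma qA_qB_commutator :
  qsub (mul (qA R) (qB R)) (mul (qB R) (qA R)) = qscale (-14) (Omega l1 l2 l3).
Proof. by rewrite /qA /qB /Omega; quat_ring. Qed.

Lemma qC_qD_commutator :
  qsub (mul (qC R) (qD R)) (mul (qD R) (qC R)) = qscale (-6) (Omega l1 l2 l3).
Proof. by rewrite /qC /qD /Omega; quat_ring. Qed.

End QuaternionSequences.

Lemma JG_catalan (R : realType) (l1 l2 l3 : R) (n a b : int) :
  qsub (qmul l1 l2 l3 (JG R (n + a)) (JG R (n + b)))
       (qmul l1 l2 l3 (JG R n) (JG R (n + a + b)))
  = qscale (1 / 49)
      (qadd (qscale ((2:R) ^ (n + 1))
               (qsub (qmul l1 l2 l3 (Theta R) (Y R (n + b) a))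
                     (qscale ((2:R) ^ b) (qmul l1 l2 l3 (Y R n a) (Theta R)))))
            (qscale (Xs R a)
               (qsub (qscale (Xs R b) (Xi l1 l2 l3))
                     (qscale (14 * Xs R (b + 2)) (Omega l1 l2 l3))))).
Proof.
have twice m : qscale (2 ^ (m + 1)) (Theta R) = qscale (2 ^ m) (qscale 2 (Theta R)).
  by rewrite expz2D; quat_ring.
have -> : (1 / 49 : R) = 1 / 7 * (1 / 7) by field.
rewrite !JG_binet !qmulZZ qsubZ !twice catalan_pow2_split xpart_catalan.
rewrite (addrAC n a b) -!Ygen_xpart qA_qB_commutator /Y /Xi.
by congr qscale; rewrite expz2D; quat_ring.
Qed.

Lemma KG_catalan (R : realType) (l1 l2 l3 : R) (n a b : int) :
  qsub (qmul l1 l2 l3 (KG R (n + a)) (KG R (n + b)))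
       (qmul l1 l2 l3 (KG R n) (KG R (n + a + b)))
  = qadd (qscale ((2:R) ^ n)
            (qsub (qmul l1 l2 l3 (Theta R) (Ystar R (n + b) a))
                  (qscale ((2:R) ^ b) (qmul l1 l2 l3 (Ystar R n a) (Theta R)))))
         (qscale (Xs R a)
            (qsub (qscale (Xs R b) (Xistar l1 l2 l3))
                  (qscale (6 * Xs R (b + 2)) (Omega l1 l2 l3)))).
Proof.
rewrite !KG_binet catalan_pow2_split xpart_catalan.
rewrite (addrAC n a b) -!Ygen_xpart qC_qD_commutator /Ystar /Xistar.
by congr qadd; quat_ring.
Qed.

Theorem theorem3p1 (R : realType) (l1 l2 l3 : R) (n a b : int) :
  qsub (qmul l1 l2 l3 (JG R (n + a)) (JG R (n + b)))
       (qmul l1 l2 l3 (JG R n) (JG R (n + a + b)))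
  = qscale (1 / 49)
      (qadd (qscale ((2:R) ^ (n + 1))
               (qsub (qmul l1 l2 l3 (Theta R) (Y R (n + b) a))
                     (qscale ((2:R) ^ b) (qmul l1 l2 l3 (Y R n a) (Theta R)))))
            (qscale (Xs R a)
               (qsub (qscale (Xs R b) (Xi l1 l2 l3))
                     (qscale (14 * Xs R (b + 2)) (Omega l1 l2 l3)))))
  /\
  qsub (qmul l1 l2 l3 (KG R (n + a)) (KG R (n + b)))
       (qmul l1 l2 l3 (KG R n) (KG R (n + a + b)))
  = qadd (qscale ((2:R) ^ n)
            (qsub (qmul l1 l2 l3 (Theta R) (Ystar R (n + b) a))
                  (qscale ((2:R) ^ b) (qmul l1 l2 l3 (Ystar R n a) (Theta R)))))
         (qscale (Xs R a)
            (qsub (qscale (Xs R b) (Xistar l1 l2 l3))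
                  (qscale (6 * Xs R (b + 2)) (Omega l1 l2 l3)))).
Proof. by split; [exact: JG_catalan | exact: KG_catalan]. Qed.
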